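(* Let $M\in\Gamma$ be a monitor, $N$ a malicious node, and $P$ an honest inbound peer of $N$ (i.e. $(P,N)\in E$). If $M$ executes $PeeV(N)$ and $N$ forwards the marker it receives from $M$ to $P$, then when $PeeV(N)$ ends, $P\notin L_N^M$.
   Context: The network is a directed graph $G=(V,E)$ of nodes; $(X,Y)\in E$ means $X$ has an outbound connection to $Y$, so $Y$ is an outbound peer of $X$ and $X$ is an inbound peer of $Y$. $\Gamma$ is a set of legitimate monitors, each connected to every node. A marker is a triple $[N,M,r]$ (target, monitor, random value). $PeeV(N)$, run by $M$: start with empty $L_N^M$; draw random $r$; send $[N,M,r]$ to $N$; until a timeout, whenever a marker equal to $[N,M,r]$ is received from a node $P$, add $P$ to $L_N^M$; then output $L_N^M$. An honest node $X$ processes every received marker with $HandleMarker(pfrom,[N,M,r])$: if $pfrom=M\in\Gamma$, forward the marker to all outbound peers of $X$; if $pfrom=N$ and $N$ is an inbound peer of $X$, send the marker to $M$; otherwise do nothing. A malicious node may deviate arbitrarily from these rules. *)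

From Stdlib Require Import List Arith.
Import ListNotations.
Set Implicit Arguments.

Record marker (T : Type) := Marker { target : T; monitor : T; rnd : nat }.
Arguments Marker {T} _ _ _.

(* A message: sender (authenticated, = pfrom at the receiver), receiver, marker. *)
Record msg (T : Type) := Msg { src : T; dst : T; mk : marker T }.
Arguments Msg {T} _ _ _.

(* A run (up to the timeout of PeeV) is the list of all messages sent, in order;
   message number k is received (and handled) by its destination at step k. *)

Definition handle_marker_allows (T : Type) (E : T -> T -> Prop) (Gamma : T -> Prop)
  (X pfrom : T) (m : marker T) (Y : T) : Prop :=
  (pfrom = monitor m /\ Gamma (monitor m) /\ E X Y)
  \/ (pfrom = target m /\ E (target m) X /\ Y = monitor m).

(* A legitimate monitor S only sends markers [Y, S, r'] to their target Y
   (the first step of PeeV(Y)). *)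
Definition peev_send (T : Type) (S Y : T) (m : marker T) : Prop :=
  monitor m = S /\ target m = Y.

(* Malicious (non-honest) nodes are unconstrained. *)
Definition valid_run (T : Type) (E : T -> T -> Prop) (Gamma honest : T -> Prop)
  (rho : list (msg T)) : Prop :=
  forall k e, nth_error rho k = Some e ->
    (Gamma (src e) -> peev_send (src e) (dst e) (mk e)) /\
    (honest (src e) -> ~ Gamma (src e) ->
       exists j e', j < k /\ nth_error rho j = Some e' /\
         dst e' = src e /\ mk e' = mk e /\
         handle_marker_allows E Gamma (src e) (src e') (mk e) (dst e)).

Definition executes_peev (T : Type) (rho : list (msg T)) (M N : T) (r : nat) : Prop :=
  exists i, nth_error rho i = Some (Msg M N (Marker N M r)).

(* P is in L_N^M at the end of PeeV(N): M received a marker equal to [N,M,r] from P. *)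
Definition in_peev_output (T : Type) (rho : list (msg T)) (M N : T) (r : nat) (P : T) : Prop :=
  exists i, nth_error rho i = Some (Msg P M (Marker N M r)).

Definition single_connection (T : Type) (E : T -> T -> Prop) : Prop :=
  forall x y, E x y -> ~ E y x.
Definition monitors_connected (T : Type) (E : T -> T -> Prop) (Gamma : T -> Prop) : Prop :=
  forall G X, Gamma G -> X <> G -> E G X \/ E X G.

(* Only the honesty of P matters, not what N forwards to it.  If P is a
   monitor it sends markers only to their target, so N = M would be honest.
   Otherwise P sends [N, M, r] only after receiving it either from the
   monitor M, which sends it only to its target N, or from N as an inbound
   peer; the first makes P = N, the second contradicts E P N under
   single_connection. *)
From Stdlib Require Import List Classical.

Section ValidRun.

Context {T : Type} {E : T -> T -> Prop} {Gamma honest : T -> Prop}.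
Context {rho : list (msg T)}.
Hypothesis Hvalid : valid_run E Gamma honest rho.

Lemma monitor_msg_to_target {k S Y m} :
  Gamma S -> nth_error rho k = Some (Msg S Y m) -> target m = Y.
Proof.
  intros HS Hk.
  destruct (Hvalid k _ Hk) as [Hpeev _].
  apply (Hpeev HS).
Qed.

Lemma honest_relay_target_inbound {k X Y m} :
  honest X -> ~ Gamma X -> nth_error rho k = Some (Msg X Y m) ->
  target m <> X -> E (target m) X.
Proof.
  intros HX HnX Hk Hneq.
  destruct (Hvalid k _ Hk) as [_ Hrelay].
  destruct (Hrelay HX HnX)
    as (j & e' & _ & Hj & Hdst & Hmk & [[Hsrc [HG _]] | [_ [Hin _]]]);
    simpl in *.
  - exfalso; apply Hneq.
    rewrite <- Hdst, <- Hmk.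
    destruct e' as [s d m']; simpl in *; subst.
    exact (monitor_msg_to_target HG Hj).
  - exact Hin.
Qed.

End ValidRun.

Theorem lemma1 (T : Type) (E : T -> T -> Prop) (Gamma honest : T -> Prop)
  (Hsingle : single_connection E)
  (Hmon : monitors_connected E Gamma)
  (Hlegit : forall G, Gamma G -> honest G)
  (rho : list (msg T)) (Hvalid : valid_run E Gamma honest rho)
  (M N P : T) (r : nat)
  (HM : Gamma M) (HN : ~ honest N) (HP : honest P) (HPN : E P N)
  (Hexec : executes_peev rho M N r)
  (Hfwd : exists i j, i < j /\
            nth_error rho i = Some (Msg M N (Marker N M r)) /\
            nth_error rho j = Some (Msg N P (Marker N M r))) :
  ~ in_peev_output rho M N r P.
Proof.
  intros [k Hk].
  assert (HNP : N <> P) by (intros ->; exact (HN HP)).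
  destruct (classic (Gamma P)) as [HGP | HnGP].
  - pose proof (monitor_msg_to_target Hvalid HGP Hk) as HNM; simpl in HNM.
    apply HN; rewrite HNM; exact (Hlegit M HM).
  - exact (Hsingle _ _ HPN (honest_relay_target_inbound Hvalid HP HnGP Hk HNP)).
Qed.
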